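(* Let $(\Omega,\mathcal F,\mathbb P)$ be a probability space with filtration $\{\mathcal F_n\}_{n\ge0}$, let $\{X_n\}_{n\ge0}$ be a supermartingale adapted to $\{\mathcal F_n\}$, and let $\kappa$ be a stopping time w.r.t. $\{\mathcal F_n\}$. Suppose there exist positive reals $b_1,b_2,c_1,c_2,c_3$ with $c_2>c_3$ such that (A1) $\mathbb P(\kappa>n)\le c_1e^{-c_2 n}$ for all sufficiently large $n\in\mathbb N$, and (A2) for all $n\in\mathbb N$, $|X_{n+1}-X_n|\le b_1 n^{b_2}e^{c_3 n}$ almost surely. Then $\mathbb E(|X_\kappa|)<\infty$ and $\mathbb E(X_\kappa)\le\mathbb E(X_0)$.
   Context: A supermartingale is an adapted process with $\mathbb E|X_n|<\infty$ and $\mathbb E(X_{n+1}\mid\mathcal F_n)\le X_n$ a.s. for all $n$. A stopping time is a random variable $\kappa:\Omega\to\mathbb N\cup\{\infty\}$ with $\{\kappa\le n\}\in\mathcal F_n$ for all $n$. *)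

From HB Require Import structures.
From mathcomp Require Import all_boot all_order all_algebra.
From mathcomp Require Import all_classical all_reals all_analysis.
Set Implicit Arguments. Unset Strict Implicit. Unset Printing Implicit Defensive.
Import Order.TTheory GRing.Theory Num.Theory.
Local Open Scope classical_set_scope.
Local Open Scope ring_scope.

Section Defs.
Context {d : measure_display} {T : measurableType d} {R : realType}.

Definition filtration (F : nat -> set (set T)) : Prop :=
  (forall n, sigma_algebra setT (F n)) /\
  (forall n, F n `<=` measurable) /\
  (forall m n, (m <= n)%N -> F m `<=` F n).

Definition measurable_wrt (G : set (set T)) (Y : T -> R) : Prop :=
  forall B : set R, measurable B -> G (Y @^-1` B).

Definition adapted (F : nat -> set (set T)) (X : nat -> T -> R) : Prop :=
  forall n, measurable_wrt (F n) (X n).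

Definition cond_exp_version (P : probability T R) (G : set (set T))
    (Z Y : T -> R) : Prop :=
  measurable_wrt G Y /\ P.-integrable setT (EFin \o Y) /\
  forall A, G A -> (\int[P]_(x in A) (Y x)%:E = \int[P]_(x in A) (Z x)%:E)%E.

Definition supermartingale (P : probability T R) (F : nat -> set (set T))
    (X : nat -> T -> R) : Prop :=
  adapted F X /\
  (forall n, P.-integrable setT (EFin \o X n)) /\
  (forall n, exists Y, cond_exp_version P (F n) (X n.+1) Y /\
       {ae P, forall w, Y w <= X n w}).

(* stopping times with values in N ∪ {∞}; None encodes ∞ *)
Definition stopping_time (F : nat -> set (set T)) (kappa : T -> option nat)
  : Prop :=
  forall n, F n [set w | exists2 m, kappa w = Some m & (m <= n)%N].

Definition st_gt (kappa : T -> option nat) (n : nat) : set T :=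
  [set w | match kappa w with None => True | Some m => (n < m)%N end].

(* the stopped value X_kappa; on the event {kappa = ∞} (which is
   P-null under the hypotheses of the theorem) it is set to 0 *)
Definition stopped (X : nat -> T -> R) (kappa : T -> option nat) : T -> R :=
  fun w => match kappa w with Some m => X m w | None => 0 end.

End Defs.

(* Write X_(kappa /\ N) = X_0 + sum_(n < N) 1_(kappa > n) (X_(n+1) - X_n).
   The event {kappa > n} lies in F_n, so by the supermartingale property each
   summand has nonpositive expectation and E X_(kappa /\ N) <= E X_0.  By (A1)
   and (A2) the L^1 norm of the n-th summand is at most
   b1 c1 n^b2 e^(-(c2 - c3) n), which decays geometrically, so
   |X_0| + sum_n |1_(kappa > n) (X_(n+1) - X_n)| is an integrable dominator.
   (A1) also forces kappa < oo a.s., hence X_(kappa /\ N) --> X_kappa a.s.,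
   and dominated convergence gives both claims. *)

From HB Require Import structures.
From mathcomp Require Import all_boot all_order all_algebra.
From mathcomp Require Import all_classical all_reals all_analysis.
From mathcomp Require Import measurable_realfun.
From mathcomp Require Import ring lra.
Set Implicit Arguments.
Unset Strict Implicit.
Unset Printing Implicit Defensive.
Import numFieldNormedType.Exports.
Import Order.TTheory GRing.Theory Num.Theory.
Local Open Scope classical_set_scope.
Local Open Scope ring_scope.

Section stopping_time.
Context d (T : measurableType d) (F : nat -> set (set T))
  (kappa : T -> option nat).
Hypotheses (hF : filtration F) (hk : stopping_time F kappa).

Lemma st_gtE n :
  st_gt kappa n = ~` [set w | exists2 m, kappa w = Some m & (m <= n)%N].
Proof.
apply/seteqP; split => w; rewrite /st_gt /=; case: (kappa w) => [m|] //=.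
- by move=> ltnm [_ [<-]]; rewrite leqNgt ltnm.
- by move=> _ [].
- by move=> Nle; rewrite ltnNge; apply/negP => lemn; apply: Nle; exists m.
Qed.

Lemma stopping_time_gt n : F n (st_gt kappa n).
Proof. by rewrite st_gtE -setTD; have [_ + _] := hF.1 n; apply; exact: hk. Qed.

Lemma measurable_st_gt n : measurable (st_gt kappa n).
Proof. exact/hF.2.1/stopping_time_gt. Qed.

Lemma st_inftyE : [set w | kappa w = None] = \bigcap_n st_gt kappa n.
Proof.
apply/seteqP; split => w /=; first by move=> kw n _; rewrite /st_gt /= kw.
by case kw: (kappa w) => [m|] // gt; have := gt m I; rewrite /st_gt /= kw ltnn.
Qed.

Lemma measurable_st_infty : measurable [set w | kappa w = None].
Proof.
rewrite st_inftyE; apply: bigcap_measurableType => n _.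
exact: measurable_st_gt.
Qed.

Lemma measure_st_infty_eq0 (R : realType) (P : probability T R) :
  (forall e : R, 0 < e -> exists n, (P (st_gt kappa n) <= e%:E)%E) ->
  P [set w | kappa w = None] = 0.
Proof.
move=> small; apply/eqP; rewrite eq_le measure_ge0 andbT.
apply/lee_addgt0Pr => e e0; rewrite add0e; have [n Pn] := small e e0.
apply: le_trans Pn; apply: le_measure; rewrite ?inE.
- exact: measurable_st_infty.
- exact: measurable_st_gt.
- by move=> w /= kw; rewrite /st_gt /= kw.
Qed.

End stopping_time.

Lemma measurable_wrt_fun d (T : measurableType d) (R : realType)
    (G : set (set T)) (Y : T -> R) :
  G `<=` measurable -> measurable_wrt G Y -> measurable_fun setT Y.
Proof. by move=> Gm mY _ B mB; rewrite setTI; exact/Gm/mY. Qed.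

Definition stopped_increment d (T : measurableType d) (R : realType)
    (X : nat -> T -> R) (kappa : T -> option nat) n w : R :=
  \1_(st_gt kappa n) w * (X n.+1 w - X n w).

(* [stopped_sum X kappa N] is the stopped process X_(kappa /\ N), written as
   a telescoping sum so that measurability and integrability are inherited
   from the X n. *)
Definition stopped_sum d (T : measurableType d) (R : realType)
    (X : nat -> T -> R) (kappa : T -> option nat) N w : R :=
  X 0%N w + \sum_(n < N) stopped_increment X kappa n w.

Section stopped_sum.
Context d (T : measurableType d) (R : realType) (X : nat -> T -> R)
  (kappa : T -> option nat).

Lemma stopped_sumS N w :
  stopped_sum X kappa N.+1 w =
  stopped_sum X kappa N w + stopped_increment X kappa N w.
Proof. by rewrite /stopped_sum big_ord_recr addrA. Qed.

Lemma stopped_sum_Some w m N :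
  kappa w = Some m -> stopped_sum X kappa N w = X (minn m N) w.
Proof.
move=> kw; elim: N => [|N IH].
  by rewrite /stopped_sum big_ord0 addr0 minn0.
rewrite stopped_sumS IH /stopped_increment indicE.
case: (ltnP N m) => [ltNm|lemN].
- rewrite mem_set ?(minn_idPr ltNm) ?(minn_idPr (ltnW ltNm)) /=; last first.
    by rewrite /st_gt /= kw.
  by rewrite mul1r addrC subrK.
- rewrite memNset ?(minn_idPl lemN) ?(minn_idPl (leqW lemN)) /=; last first.
    by rewrite /st_gt /= kw ltnNge lemN.
  by rewrite mul0r addr0.
Qed.

Lemma stopped_sum_near w m : kappa w = Some m ->
  \forall N \near \oo, stopped_sum X kappa N w = stopped X kappa w.
Proof.
move=> kw; exists m => // N /= leN.
by rewrite (stopped_sum_Some _ kw) (minn_idPl leN) /stopped kw.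
Qed.

Lemma normr_stopped_sum_le N w :
  `|stopped_sum X kappa N w| <=
  `|X 0%N w| + \sum_(n < N) `|stopped_increment X kappa n w|.
Proof.
by apply: (le_trans (ler_normD _ _)); rewrite lerD2l; exact: ler_norm_sum.
Qed.

End stopped_sum.

Section supermartingale.
Context d (T : measurableType d) (R : realType) (P : probability T R)
  (F : nat -> set (set T)) (X : nat -> T -> R) (kappa : T -> option nat).
Hypotheses (hF : filtration F) (hX : supermartingale P F X)
  (hk : stopping_time F kappa).
Local Open Scope ereal_scope.

Lemma measurable_process n : measurable_fun setT (X n).
Proof. exact: (measurable_wrt_fun (hF.2.1 n) (hX.1 n)). Qed.

Lemma supermartingale_integral_le n A : F n A ->
  \int[P]_(x in A) (X n.+1 x)%:E <= \int[P]_(x in A) (X n x)%:E.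
Proof.
move=> FA; have mA : measurable A := hF.2.1 _ _ FA.
have [Y [[mY [iY intY]] [N [mN PN0 YleX]]]] := hX.2.2 n.
have iXA : P.-integrable A (EFin \o X n) by exact: integrableS (hX.2.1 n).
have iYA : P.-integrable A (EFin \o Y) by exact: integrableS iY.
rewrite -(intY _ FA) (negligible_integral mN mA iYA PN0).
rewrite [leRHS](negligible_integral mN mA iXA PN0).
apply: le_integral; first exact: measurableD.
- by apply: (integrableS mA (measurableD mA mN) _ iYA) => x [].
- by apply: (integrableS mA (measurableD mA mN) _ iXA) => x [].
move=> x; rewrite inE => -[_ Nx]; rewrite lee_fin.
by apply/negPn/negP => not_le; apply/Nx/YleX/negP.
Qed.

Lemma measurable_stopped_increment n :
  measurable_fun setT (stopped_increment X kappa n).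
Proof.
apply: measurable_funM; first exact/measurable_indic/(measurable_st_gt hF hk).
by apply: measurable_funB; exact: measurable_process.
Qed.

Lemma stopped_incrementE n :
  EFin \o stopped_increment X kappa n =
  (fun w => (X n.+1 w)%:E - (X n w)%:E) \_ (st_gt kappa n).
Proof.
apply/funext => w; rewrite /patch /= /stopped_increment indicE.
by case: (w \in st_gt kappa n); rewrite /= ?mul1r ?mul0r ?EFinB.
Qed.

Lemma integrable_stopped_increment n :
  P.-integrable setT (EFin \o stopped_increment X kappa n).
Proof.
have iD := integrableB measurableT (hX.2.1 n.+1) (hX.2.1 n).
apply: le_integrable iD => //.
  exact/measurable_EFinP/measurable_stopped_increment.
move=> w _; rewrite /= lee_fin /stopped_increment indicE normrM.
by case: (w \in st_gt kappa n); rewrite /= ?normr1 ?normr0 ?mul1r ?mul0r.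
Qed.

Lemma integral_stopped_increment_le0 n :
  \int[P]_x (stopped_increment X kappa n x)%:E <= 0.
Proof.
have mA := measurable_st_gt hF hk n.
rewrite -[X in X <= _]/(integral _ _ (EFin \o _)) stopped_incrementE.
rewrite -integral_mkcond integralB //; last 2 first.
- exact: integrableS (hX.2.1 n.+1).
- exact: integrableS (hX.2.1 n).
by rewrite sube_le0; exact/supermartingale_integral_le/(stopping_time_gt hF hk).
Qed.

Lemma integrable_stopped_sum N :
  P.-integrable setT (EFin \o stopped_sum X kappa N).
Proof.
elim: N => [|N IH].
  apply: eq_integrable (hX.2.1 0%N) => // w _.
  by rewrite /= /stopped_sum big_ord0 addr0.
have := integrableD measurableT IH (integrable_stopped_increment N).
by apply: eq_integrable => // w _; rewrite /= stopped_sumS EFinD.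
Qed.

Lemma integral_stopped_sum_le N :
  \int[P]_x (stopped_sum X kappa N x)%:E <= \int[P]_x (X 0%N x)%:E.
Proof.
elim: N => [|N IH].
  rewrite le_eqVlt (eq_integral (fun x => (X 0%N x)%:E)) ?eqxx // => w _.
  by rewrite /stopped_sum big_ord0 addr0.
rewrite (eq_integral (fun w => (stopped_sum X kappa N w)%:E +
                               (stopped_increment X kappa N w)%:E)); last first.
  by move=> w _; rewrite stopped_sumS EFinD.
rewrite integralD //; last 2 first.
- exact: integrable_stopped_sum.
- exact: integrable_stopped_increment.
apply: le_trans IH; rewrite -[leRHS]adde0 leeD2l //.
exact: integral_stopped_increment_le0.
Qed.

Lemma measurable_stopped : measurable_fun setT (stopped X kappa).
Proof.
have mfin := measurableC (measurable_st_infty hF hk).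
apply: (measurable_fun_cvg (h := fun N w =>
  stopped_sum X kappa N w * \1_(~` [set w | kappa w = None]) w)%R).
  move=> N; apply: measurable_funM; last exact: measurable_indic.
  by apply: measurable_funD; [exact: measurable_process|
    apply: measurable_sum => n; exact: measurable_stopped_increment].
move=> w _; rewrite indicE; case kw: (kappa w) => [m|].
  rewrite mem_set /=; last by rewrite kw.
  apply: cvg_near_cst; have := stopped_sum_near X kw.
  by apply: filterS => N /= ->; rewrite mulr1.
rewrite (_ : (w \in _) = false) /=; last first.
  by apply/negbTE; rewrite in_setC negbK inE.
by rewrite /stopped kw; under eq_fun do rewrite mulr0; exact: cvg_cst.
Qed.

Lemma integral_abs_stopped_increment_le n (M : R) : (0 <= M)%R ->
  {ae P, forall w, (`|X n.+1 w - X n w| <= M)%R} ->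
  \int[P]_x `|stopped_increment X kappa n x|%:E <= M%:E * P (st_gt kappa n).
Proof.
move=> M0 [N [mN PN0 DleM]].
have mA := measurable_st_gt hF hk n.
have -> : \int[P]_x `|stopped_increment X kappa n x|%:E =
          \int[P]_(x in st_gt kappa n) `|X n.+1 x - X n x|%R%:E.
  rewrite [RHS]integral_mkcond; apply: eq_integral => w _.
  rewrite /patch /stopped_increment indicE.
  by case: (w \in st_gt kappa n); rewrite /= ?mul1r // mul0r normr0.
rewrite -(integral_cst _ mA); apply: ae_ge0_le_integral => //.
  apply/measurable_EFinP/measurableT_comp => //.
  apply: measurable_funS (measurable_funB (measurable_process _)
                                          (measurable_process _)) => //.
exists N; split => // w /= not_le; apply: DleM => /= le_M; apply: not_le => _.
by rewrite lee_fin.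
Qed.

Lemma stopped_dominated :
  P [set w | kappa w = None] = 0 ->
  \sum_(n <oo) \int[P]_x `|stopped_increment X kappa n x|%:E < +oo ->
  P.-integrable setT (EFin \o stopped X kappa) /\
  \int[P]_x (stopped X kappa x)%:E <= \int[P]_x (X 0%N x)%:E.
Proof.
move=> Pinfty0 sum_fin.
pose g w := `|X 0%N w|%:E + \sum_(n <oo) `|stopped_increment X kappa n w|%:E.
have m_incr n :
    measurable_fun setT (fun w => `|stopped_increment X kappa n w|%:E).
  exact/measurable_EFinP/measurableT_comp/measurable_stopped_increment.
have mX0 : measurable_fun setT (fun w => `|X 0%N w|%:E).
  exact/measurable_EFinP/measurableT_comp/measurable_process.
have msum : measurable_fun setT
    (fun w => \sum_(n <oo) `|stopped_increment X kappa n w|%:E).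
  by apply: ge0_emeasurable_sum => // n w _ _.
have mg : measurable_fun setT g := emeasurable_funD mX0 msum.
have g0 w : (0 <= g w)%E by rewrite adde_ge0 //; apply: nneseries_ge0 => n _ _.
have ig : P.-integrable setT g.
  apply/integrableP; split => //; rewrite (eq_integral g); last first.
    by move=> w _; exact: gee0_abs.
  rewrite /g ge0_integralD //; last first.
    by move=> w _; apply: nneseries_ge0 => n _ _.
  rewrite integral_nneseries // lte_add_pinfty //.
  by have /integrableP[] := hX.2.1 0%N.
have sum_le_g :
    {ae P, forall w N, setT w -> `|(stopped_sum X kappa N w)%:E| <= g w}.
  apply: aeW => w N _; rewrite abse_EFin /g.
  apply: (@le_trans _ _
    (`|X 0%N w|%:E + \sum_(n < N) `|stopped_increment X kappa n w|%:E)).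
    by rewrite sumEFin -EFinD lee_fin; exact: normr_stopped_sum_le.
  rewrite leeD2l //.
  rewrite -(big_mkord xpredT (fun n => `|stopped_increment X kappa n w|%:E)).
  exact: nneseries_lim_ge.
have sum_cvg : {ae P, forall w, setT w ->
    (stopped_sum X kappa N w)%:E @[N --> \oo] --> (stopped X kappa w)%:E}.
  exists [set w | kappa w = None]; split => //.
    exact: (measurable_st_infty hF hk).
  move=> w /= ncvg; case kw: (kappa w) => [m|] //; exfalso; apply: ncvg => _.
  apply: cvg_near_cst; have := stopped_sum_near X kw.
  by apply: filterS => N /= ->.
have [istopped _ int_cvg] := dominated_convergence measurableT
  (fun N => measurable_int P (integrable_stopped_sum N))
  ((measurable_EFinP _ _).2 measurable_stopped) sum_cvg ig sum_le_g.
split => //; rewrite -(cvg_lim _ int_cvg) //.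
by apply: lime_le; [exact: cvgP int_cvg|exact/nearW/integral_stopped_sum_le].
Qed.

End supermartingale.

Section tail_estimates.
Context (R : realType).
Local Open Scope ereal_scope.

Lemma nneseries_geometric_lt (a : nat -> \bar R) (K q : R) N :
  (forall n, 0 <= a n) -> (forall n, a n < +oo) ->
  (0 <= K)%R -> (0 < q < 1)%R ->
  (forall n, (N <= n)%N -> a n <= (K * q ^+ n)%:E) ->
  \sum_(n <oo) a n < +oo.
Proof.
move=> a0 afin K0 /andP[q0 q1] a_le.
rewrite (nneseries_split 0 N) // add0n lte_add_pinfty //.
  by apply: lte_sum_pinfty => n _; exact: afin.
have KqN0 : (0 <= K * q ^+ N)%R by rewrite mulr_ge0 // exprn_ge0 // ltW.
rewrite -nneseries_addn //; apply: (le_lt_trans (lee_nneseries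
  (v := fun n => (K * q ^+ N * q ^+ n)%:E) _ _)) => // [n _|].
  by rewrite -mulrA -exprD [(N + n)%N]addnC a_le // leq_addl.
apply: (@le_lt_trans _ _ (K * q ^+ N / (1 - q))%:E); last exact: ltry.
apply: lime_le.
  apply: is_cvg_nneseries => n _ _.
  by rewrite lee_fin mulr_ge0 // exprn_ge0 // ltW.
have normq1 : (`|q| < 1)%R by rewrite ger0_norm // ltW.
by apply: nearW => n; rewrite sumEFin lee_fin; exact: geometric_le_lim.
Qed.

Lemma powR_expR_le_geometric (b dl : R) k n :
  (0 < dl)%R -> (b <= k.+1%:R)%R -> (0 < n)%N ->
  (n%:R `^ b * expR (- (dl * n%:R)) <=
   k.+1`!%:R / (dl / 2) ^+ k.+1 * expR (- (dl / 2)) ^+ n)%R.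
Proof.
move=> dl0 bk n0; set x := (dl / 2 * n%:R)%R; set c := (k.+1`!%:R : R).
have c0 : (0 < c)%R by rewrite ltr0n fact_gt0.
have dl20 : (0 < (dl / 2) ^+ k.+1)%R by rewrite exprn_gt0 // divr_gt0.
have pow_le : (n%:R `^ b <= n%:R ^+ k.+1)%R.
  by rewrite -powR_mulrn ?ler0n //; apply: ler_powR => //; rewrite ler1n.
(* one term of the exponential series: x^(k+1) / (k+1)! <= e^x *)
have xk_le : (x ^+ k.+1 <= c * expR x)%R.
  rewrite -ler_pdivrMl // mulrC; apply: le_trans (expR_ge1Dxn k _).
    by rewrite lerDr.
  by rewrite mulr_ge0 // divr_ge0 // ltW.
have nk_le : (n%:R ^+ k.+1 <= c / (dl / 2) ^+ k.+1 * expR x)%R.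
  by rewrite mulrAC ler_pdivlMr // mulrC -exprMn.
have expE : (expR x * expR (- (dl * n%:R)) = expR (- (dl / 2)) ^+ n)%R.
  by rewrite -expRD -expRM_natl; congr expR; rewrite /x; field.
apply: (le_trans (ler_wpM2r (expR_ge0 _) pow_le)).
apply: (le_trans (ler_wpM2r (expR_ge0 _) nk_le)).
by rewrite -expE !mulrA.
Qed.

Lemma expR_decay_le (c1 c2 e : R) N : (0 < c2)%R -> (0 < e)%R ->
  exists2 n, (N <= n)%N & (c1 * expR (- (c2 * n%:R)) <= e)%R.
Proof.
move=> c20 e0; pose n := maxn N (Num.truncn (c1 / (c2 * e))).+1.
exists n; first exact: leq_maxl.
have c1_lt : (c1 < n%:R * (c2 * e))%R.
  rewrite -ltr_pdivrMr ?mulr_gt0 //; apply: lt_le_trans (truncnS_gt _) _.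
  by rewrite ler_nat leq_maxr.
have := expR_ge1Dx (c2 * n%:R).
rewrite expRN ler_pdivrMr ?expR_gt0 //; nra.
Qed.

Lemma growth_decay_le_geometric (b1 b2 c1 c2 c3 : R) :
  (0 <= b1)%R -> (0 <= c1)%R -> (c3 < c2)%R ->
  exists K q, [/\ (0 <= K)%R, (0 < q < 1)%R & forall n, (0 < n)%N ->
    (b1 * n%:R `^ b2 * expR (c3 * n%:R) * (c1 * expR (- (c2 * n%:R)))
       <= K * q ^+ n)%R].
Proof.
move=> b10 c10 c32; set dl := (c2 - c3)%R; pose k := Num.truncn b2.
have dl0 : (0 < dl)%R by rewrite subr_gt0.
exists (b1 * c1 * (k.+1`!%:R / (dl / 2) ^+ k.+1))%R, (expR (- (dl / 2))).
split.
- apply: mulr_ge0; first exact: mulr_ge0.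
  by rewrite divr_ge0 // exprn_ge0 // divr_ge0 // ltW.
- by rewrite expR_gt0 expR_lt1 oppr_lt0 divr_gt0.
move=> n n0; have b2k : (b2 <= k.+1%:R)%R by exact/ltW/truncnS_gt.
have expE : (expR (- (dl * n%:R)) = expR (c3 * n%:R) * expR (- (c2 * n%:R)))%R.
  by rewrite -expRD /dl; congr expR; ring.
rewrite [leLHS](_ : _ =
    b1 * c1 * (n%:R `^ b2 * expR (- (dl * n%:R))))%R; last first.
  by rewrite expE; ring.
rewrite -[leRHS]mulrA ler_wpM2l ?mulr_ge0 //; exact: powR_expR_le_geometric.
Qed.

End tail_estimates.

Theorem theorem4p3 (d : measure_display) (T : measurableType d) (R : realType)
  (P : probability T R) (F : nat -> set (set T)) (X : nat -> T -> R)
  (kappa : T -> option nat) (b1 b2 c1 c2 c3 : R) :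
  filtration F ->
  supermartingale P F X ->
  stopping_time F kappa ->
  0 < b1 -> 0 < b2 -> 0 < c1 -> 0 < c2 -> 0 < c3 -> c3 < c2 ->
  (exists N : nat, forall n : nat, (N <= n)%N ->
      (P (st_gt kappa n) <= (c1 * expR (- (c2 * n%:R)))%:E)%E) ->
  (forall n : nat, (0 < n)%N ->
      {ae P, forall w, `|X n.+1 w - X n w| <=
                       b1 * (n%:R `^ b2) * expR (c3 * n%:R)}) ->
  P.-integrable setT (EFin \o stopped X kappa) /\
  (\int[P]_x (stopped X kappa x)%:E <= \int[P]_x (X 0%N x)%:E)%E.
Proof.
move=> hF hX hk b10 _ c10 c20 _ c32 [N tail] incr_bound.
apply: (stopped_dominated hF hX hk).
  apply: (measure_st_infty_eq0 hF hk) => e e0.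
  have [n Nn small] := expR_decay_le c1 N c20 e0.
  by exists n; apply: le_trans (tail n Nn) _; rewrite lee_fin.
have [K [q [K0 q01 geo]]] :=
  growth_decay_le_geometric b2 (ltW b10) (ltW c10) c32.
apply: (nneseries_geometric_lt (N := maxn N 1) _ _ K0 q01) => [n|n|n Nn].
- exact: integral_ge0.
- by have /integrableP[] := integrable_stopped_increment hF hX hk n.
have n0 : (0 < n)%N := leq_trans (leq_maxr _ _) Nn.
pose M := b1 * n%:R `^ b2 * expR (c3 * n%:R).
have M0 : 0 <= M by rewrite !mulr_ge0 ?powR_ge0 ?expR_ge0 // ltW.
apply: le_trans (integral_abs_stopped_increment_le hF hX hk M0 (incr_bound n n0)) _.
apply: le_trans (lee_wpmul2l _ (tail n (leq_trans (leq_maxl _ _) Nn))) _.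
  by rewrite lee_fin.
by rewrite -EFinM lee_fin geo.
Qed.
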